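(* Let $G$ be a connected finite simple graph with vertex set $[n]$. Then the connected subgraph arrangement $\mathcal{A}_G$ in $\mathbb{Q}^n$ is projectively unique: for every hyperplane arrangement $\mathcal{C}$ in $\mathbb{Q}^n$ whose intersection lattice $L(\mathcal{C})$ is isomorphic as a poset to $L(\mathcal{A}_G)$, there exists $\varphi\in \mathrm{GL}(\mathbb{Q}^n)$ with $\mathcal{C}=\{\varphi(H)\mid H\in\mathcal{A}_G\}$.
   Context: Let $G=(N,E)$ be a finite simple graph with vertex set $N=[n]=\{1,\dots,n\}$. For $\varnothing\neq I\subseteq N$, $G[I]$ denotes the induced subgraph on $I$, and $H_I:=\ker\big(\sum_{i\in I}x_i\big)$, where $x_1,\dots,x_n$ are the coordinate functions on $\mathbb{K}^n$ for a field $\mathbb{K}$. The connected subgraph arrangement is $\mathcal{A}_G(\mathbb{K}):=\{H_I\mid \varnothing\neq I\subseteq N,\ G[I]\text{ connected}\}$, a central hyperplane arrangement in $\mathbb{K}^n$; $\mathcal{A}_G:=\mathcal{A}_G(\mathbb{Q})$. The intersection lattice $L(\mathcal{A})$ of an arrangement is the set of all intersections of subsets of $\mathcal{A}$ (including $V$ itself), ordered by reverse inclusion. *)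

(* Subspaces of Q^n are represented (up to (_ == _)%MS) by
   row-space matrices 'M[rat]_n, vectors of Q^n being row vectors 'rV[rat]_n. *)
From HB Require Import structures.
From mathcomp Require Import all_boot all_order all_algebra.
Set Implicit Arguments. Unset Strict Implicit. Unset Printing Implicit Defensive.
Import Order.TTheory GRing.Theory Num.Theory.
Local Open Scope ring_scope.

Definition simple_graph (n : nat) (e : rel 'I_n) : Prop :=
  irreflexive e /\ symmetric e.

Definition induced_connected (n : nat) (e : rel 'I_n) (J : {set 'I_n}) : bool :=
  [forall i in J, forall j in J,
    connect [rel x y | [&& e x y, x \in J & y \in J]] i j].

Definition graph_connected (n : nat) (e : rel 'I_n) : bool :=
  induced_connected e [set: 'I_n].

Definition hypI (n : nat) (J : {set 'I_n}) : 'M[rat]_n :=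
  kermx (\col_(i < n) ((i \in J)%:R : rat)).

Definition is_hyperplane (n : nat) (H : 'M[rat]_n) : Prop :=
  (0 < n)%N /\ \rank H = n.-1.

Definition arrangement (n : nat) (C : seq 'M[rat]_n) : Prop :=
  forall H, H \in C -> is_hyperplane H.

Definition conn_subgraph_arr (n : nat) (e : rel 'I_n) : seq 'M[rat]_n :=
  [seq hypI J | J <- enum [set J : {set 'I_n} |
     (J != set0) && induced_connected e J ]].

Definition in_lattice (n : nat) (A : seq 'M[rat]_n) (X : 'M[rat]_n) : Prop :=
  exists s : seq 'M[rat]_n, {subset s <= A} /\
    (X == \bigcap_(H <- s) H)%MS.

(* Poset isomorphism between L(C) and L(A), both ordered by reverse
   inclusion; elements are subspaces, i.e. matrices up to (_ == _)%MS. *)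
Definition lattice_iso (n : nat) (C A : seq 'M[rat]_n) : Prop :=
  exists (f g : 'M[rat]_n -> 'M[rat]_n),
    [/\ forall X, in_lattice C X -> in_lattice A (f X),
        forall Y, in_lattice A Y -> in_lattice C (g Y),
        forall X, in_lattice C X -> (g (f X) == X)%MS,
        forall Y, in_lattice A Y -> (f (g Y) == Y)%MS &
        forall X X', in_lattice C X -> in_lattice C X' ->
          ((X' <= X)%MS <-> (f X' <= f X)%MS)].

(* C = { phi(H) | H in A } as sets of subspaces, phi acting on row vectors. *)
Definition image_arr (n : nat) (phi : 'M[rat]_n) (A C : seq 'M[rat]_n) : Prop :=
  (forall H, H \in C -> exists2 H', H' \in A & (H == H' *m phi)%MS) /\
  (forall H', H' \in A -> exists2 H, H \in C & (H == H' *m phi)%MS).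

From HB Require Import structures.
From mathcomp Require Import all_boot all_order all_algebra.
From mathcomp Require Import zify.
Set Implicit Arguments. Unset Strict Implicit. Unset Printing Implicit Defensive.
Import Order.TTheory GRing.Theory Num.Theory.
Local Open Scope ring_scope.

(* An isomorphism of intersection lattices matches the hyperplanes (atoms) of
   the two arrangements so that "the intersection of the hyperplanes in t lies
   in H0" holds on one side iff it holds on the other.  In A_G the coordinate
   hyperplanes H_{i} are in general position and the hyperplane H_[n] is
   generic with respect to them, so their partners in C are, after a change of
   coordinates phi, again x_i = 0 and x_1 + ... + x_n = 0.  Every other H_J is
   then forced: it contains both the intersection of the H_{i}, i in J, and the
   intersection of H_[n] with the H_{i}, i not in J, and these two subspaces
   span H_J. *)

Section MatrixFacts.
Variable F : fieldType.

Lemma mx11_eq0 (x : 'M[F]_1) : (x == 0) = (x 0 0 == 0).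
Proof.
apply/eqP/eqP => [-> | x0]; first by rewrite mxE.
by apply/matrixP => i j; rewrite !ord1 x0 mxE.
Qed.

Lemma sub_bigcapmx_seq m n (A : 'M[F]_(m, n)) (s : seq 'M[F]_n) :
  (A <= \bigcap_(H <- s) H)%MS = all (fun H => A <= H)%MS s.
Proof.
elim: s => [|H s IH]; first by rewrite big_nil submx1.
by rewrite big_cons sub_capmx IH.
Qed.

Lemma bigcapmx_seq_inf n (s : seq 'M[F]_n) H :
  H \in s -> (\bigcap_(H' <- s) H' <= H)%MS.
Proof.
move=> Hs; move: (submx_refl (\bigcap_(H' <- s) H')%MS).
by rewrite sub_bigcapmx_seq => /allP->.
Qed.

Lemma submx_rV m1 m2 n (A : 'M[F]_(m1, n)) (B : 'M[F]_(m2, n)) :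
  (forall u : 'rV_n, (u <= A)%MS -> (u <= B)%MS) -> (A <= B)%MS.
Proof. by move=> sAB; apply/row_subP => i; apply/sAB/row_sub. Qed.

Lemma sub_kermx_col n (u : 'rV[F]_n) (a : 'cV[F]_n) :
  (u <= kermx a)%MS = ((u *m a) 0 0 == 0).
Proof. by rewrite sub_kermx mx11_eq0. Qed.

End MatrixFacts.

Section Hyperplanes.
Variable n : nat.
Implicit Types H K X : 'M[rat]_n.

Lemma hyperplane_proper H : is_hyperplane H -> ~~ (1%:M <= H)%MS.
Proof. by case=> n_gt0 rH; rewrite sub1mx /row_full rH; apply/negP => /eqP; lia. Qed.

Lemma hyperplane_max H X :
  is_hyperplane H -> (H <= X)%MS -> ~~ (1%:M <= X)%MS -> (X <= H)%MS.
Proof.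
case=> n_gt0 rH sHX; rewrite sub1mx /row_full => rX.
have rX_le : (\rank X <= n.-1)%N by have := rank_leq_row X; move: rX; lia.
have /andP[] // : (H == X)%MS.
by rewrite -(mxrank_leqif_eq sHX).2 eqn_leq mxrankS // rH.
Qed.

Lemma hyperplane_kermx K : is_hyperplane K -> exists a : 'cV[rat]_n, (K == kermx a)%MS.
Proof.
case=> n_gt0 rK; have /rowV0Pn[w wK w0] : kermx K^T != 0.
  by rewrite -mxrank_eq0 mxrank_ker mxrank_tr rK; lia.
exists w^T; have sK : (K <= kermx w^T)%MS.
  by rewrite sub_kermx -[K]trmxK -trmx_mul (sub_kermxP wK) trmx0.
rewrite -(mxrank_leqif_eq sK).2 mxrank_ker mxrank_tr rank_rV w0 rK.
by rewrite subn1.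
Qed.

End Hyperplanes.

Definition hyp_matching n (C A : seq 'M[rat]_n) (k : 'M[rat]_n -> 'M[rat]_n) :=
  [/\ forall H, H \in A -> k H \in C,
      forall K, K \in C -> exists2 H, H \in A & (K == k H)%MS &
      forall t H0, {subset t <= A} -> H0 \in A ->
        (\bigcap_(H <- t) H <= H0)%MS = (\bigcap_(H <- map k t) H <= k H0)%MS].

Section LatticeElements.
Variables (n : nat) (A : seq 'M[rat]_n).

Lemma in_lattice_top : in_lattice A 1%:M.
Proof. by exists [::]; rewrite big_nil submx_refl. Qed.

Lemma in_lattice_bigcap t : {subset t <= A} -> in_lattice A (\bigcap_(H <- t) H)%MS.
Proof. by exists t; rewrite submx_refl. Qed.

Lemma in_lattice_mem H : H \in A -> in_lattice A H.
Proof.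
move=> HA; have -> : H = (\bigcap_(H' <- [:: H]) H')%MS by rewrite big_seq1.
by apply: in_lattice_bigcap => H'; rewrite inE => /eqP->.
Qed.

Lemma in_lattice_proper X :
  in_lattice A X -> ~~ (1%:M <= X)%MS -> exists2 H, H \in A & (X <= H)%MS.
Proof.
case=> -[|H t] [tA /andP[sXt stX]] X_proper.
  by rewrite big_nil in stX; rewrite stX in X_proper.
exists H; first by apply: tA; rewrite inE eqxx.
by apply: submx_trans sXt _; rewrite big_cons capmxSl.
Qed.

End LatticeElements.

Section LatticeIsoMatching.
Variables (n : nat) (C A : seq 'M[rat]_n) (f g : 'M[rat]_n -> 'M[rat]_n).
Hypotheses (arC : arrangement C) (arA : arrangement A).
Hypothesis fL : forall X, in_lattice C X -> in_lattice A (f X).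
Hypothesis gL : forall Y, in_lattice A Y -> in_lattice C (g Y).
Hypothesis gK : forall Y, in_lattice A Y -> (f (g Y) == Y)%MS.
Hypothesis f_mono : forall X X', in_lattice C X -> in_lattice C X' ->
  (X' <= X)%MS <-> (f X' <= f X)%MS.

Lemma iso_top : (1%:M <= f 1%:M)%MS.
Proof.
have /andP[_ top] := gK (in_lattice_top A); apply: submx_trans top _.
by apply/(f_mono (in_lattice_top C) (gL (in_lattice_top A))); exact: submx1.
Qed.

Lemma iso_proper X : in_lattice C X -> ~~ (1%:M <= X)%MS -> ~~ (1%:M <= f X)%MS.
Proof.
move=> LX; apply: contra => top; apply/(f_mono LX (in_lattice_top C)).
exact: submx_trans (submx1 _) top.
Qed.

Lemma inv_iso_proper H : H \in A -> ~~ (1%:M <= g H)%MS.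
Proof.
move=> HA; apply/negP => top; have /negP := hyperplane_proper (arA HA); apply.
have LH := in_lattice_mem HA; have /andP[fgH _] := gK LH.
apply: submx_trans iso_top (submx_trans _ fgH).
exact/(f_mono (gL LH) (in_lattice_top C)).
Qed.

Lemma iso_hyp_onto H : H \in A -> exists2 K, K \in C & (f K == H)%MS.
Proof.
move=> HA; have LgH := gL (in_lattice_mem HA).
have [K KC sK] := in_lattice_proper LgH (inv_iso_proper HA); exists K => //.
have LK := in_lattice_mem KC; have /andP[_ HfgH] := gK (in_lattice_mem HA).
have sHfK : (H <= f K)%MS by apply: submx_trans HfgH _; apply/(f_mono LK LgH).
by rewrite sHfK (hyperplane_max (arA HA) sHfK (iso_proper LK (hyperplane_proper (arC KC)))).
Qed.

Definition hyp_preim (H : 'M[rat]_n) : 'M[rat]_n :=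
  nth 0 C (find (fun K => f K == H)%MS C).

Lemma hyp_preimP H : H \in A -> hyp_preim H \in C /\ (f (hyp_preim H) == H)%MS.
Proof.
move=> /iso_hyp_onto[K KC fK].
have hasK : has (fun K => f K == H)%MS C by apply/hasP; exists K.
by split; [rewrite mem_nth // -has_find | exact: (nth_find 0 hasK)].
Qed.

Lemma in_lattice_preim t : {subset t <= A} ->
  in_lattice C (\bigcap_(H <- map hyp_preim t) H)%MS.
Proof. by move=> tA; apply: in_lattice_bigcap => _ /mapP[H /tA/hyp_preimP[kC _] ->]. Qed.

Lemma iso_bigcap_preim t : {subset t <= A} ->
  (f (\bigcap_(H <- map hyp_preim t) H)%MS == \bigcap_(H <- t) H)%MS.
Proof.
move=> tA; have LX := in_lattice_preim tA; have LY := in_lattice_bigcap tA.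
have /andP[fgY Yfg] := gK LY; apply/andP; split.
  rewrite sub_bigcapmx_seq; apply/allP => H Ht.
  have [kC /andP[fk _]] := hyp_preimP (tA _ Ht); apply: submx_trans fk.
  by apply/(f_mono (in_lattice_mem kC) LX)/bigcapmx_seq_inf/map_f.
apply: submx_trans Yfg _; apply/(f_mono LX (gL LY)).
rewrite sub_bigcapmx_seq all_map; apply/allP => H Ht /=.
have [kC /andP[_ kf]] := hyp_preimP (tA _ Ht); apply/(f_mono (in_lattice_mem kC) (gL LY)).
exact: submx_trans fgY (submx_trans (bigcapmx_seq_inf Ht) kf).
Qed.

Lemma hyp_matching_preim : hyp_matching C A hyp_preim.
Proof.
split=> [H /hyp_preimP[] // | K KC | t H0 tA H0A].
  have LK := in_lattice_mem KC.
  have [H HA sH] := in_lattice_proper (fL LK) (iso_proper LK (hyperplane_proper (arC KC))).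
  exists H => //; have [kC /andP[_ kf]] := hyp_preimP HA.
  have sK : (K <= hyp_preim H)%MS.
    by apply/(f_mono (in_lattice_mem kC) LK); apply: submx_trans sH kf.
  by rewrite sK (hyperplane_max (arC KC) sK (hyperplane_proper (arC kC))).
have [kC /eqmxP fk] := hyp_preimP H0A.
rewrite -fk -(eqmxP (iso_bigcap_preim tA)).
by apply/idP/idP => /(f_mono (in_lattice_mem kC) (in_lattice_preim tA)).
Qed.

End LatticeIsoMatching.

Lemma lattice_iso_matching n (C A : seq 'M[rat]_n) :
  arrangement C -> arrangement A -> lattice_iso C A -> exists k, hyp_matching C A k.
Proof.
move=> arC arA [f [g [fL gL _ gK f_mono]]].
by exists (hyp_preim C f); apply: (hyp_matching_preim arC arA fL gL gK f_mono).
Qed.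

Section CoordinateFrame.
Variables (F : fieldType) (n : nat) (a : 'I_n -> 'cV[F]_n) (b : 'cV[F]_n).
Hypothesis a_free : forall i,
  exists2 u : 'rV_n, (forall j, j != i -> u *m a j = 0) & u *m a i != 0.
Hypothesis b_generic : forall i,
  exists2 u : 'rV_n, (forall j, j != i -> u *m a j = 0) & u *m b != 0.

Let Na : 'M[F]_n := \matrix_(r, j) a j r 0.

Lemma mulmx_Na (u : 'rV_n) j : (u *m Na) 0 j = (u *m a j) 0 0.
Proof. by rewrite !mxE; apply: eq_bigr => r _; rewrite mxE. Qed.

Lemma Na_unit : Na \in unitmx.
Proof.
rewrite -row_full_unit -sub1mx; apply/row_subP => i; rewrite row1.
have [u ua uai] := a_free i; rewrite mx11_eq0 in uai.
have -> : 'e_i = ((u *m a i) 0 0)^-1 *: (u *m Na).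
  apply/rowP => j; rewrite [LHS]mxE [RHS]mxE mulmx_Na; case: (eqVneq j i) => [-> | ji].
    by rewrite !eqxx mulVf.
  by rewrite (ua j ji) !mxE andbF mulr0.
by rewrite scalemx_sub ?submxMl.
Qed.

Let c := invmx Na *m b.

Lemma mulmx_b (u : 'rV_n) : (u *m b) 0 0 = \sum_j (u *m a j) 0 0 * c j 0.
Proof.
by rewrite -{1}(mulKVmx Na_unit b) (mulmxA u) mxE; apply: eq_bigr => j _; rewrite mulmx_Na.
Qed.

Lemma c_neq0 i : c i 0 != 0.
Proof.
have [u ua] := b_generic i; rewrite mx11_eq0 mulmx_b (bigD1 i) //= big1 ?addr0.
  by rewrite mulf_eq0 negb_or => /andP[].
by move=> j ji; rewrite ua // mxE mul0r.
Qed.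

Let M := Na *m diag_mx c^T.

Lemma mulmx_M (u : 'rV_n) j : (u *m M) 0 j = (u *m a j) 0 0 * c j 0.
Proof. by rewrite mulmxA mul_mx_diag mxE mulmx_Na [c^T _ _]mxE. Qed.

Lemma M_unit : M \in unitmx.
Proof.
rewrite unitmx_mul Na_unit unitmxE det_diag unitfE; apply/prodf_neq0 => i _.
by rewrite mxE c_neq0.
Qed.

(* The normals a_i become the coordinate functionals after rescaling by c,
   chosen so that b is their sum. *)
Lemma coordinate_frame : exists2 phi : 'M[F]_n, phi \in unitmx &
  forall v : 'rV_n, (forall i, (v *m phi *m a i == 0) = (v 0 i == 0)) /\
                    (v *m phi *m b == 0) = (\sum_i v 0 i == 0).
Proof.
exists (invmx M); first by rewrite unitmx_inv M_unit.
have coordE (v : 'rV_n) j : (v *m invmx M *m a j) 0 0 * c j 0 = v 0 j.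
  by rewrite -mulmx_M mulmxKV ?M_unit.
move=> v; split=> [i|]; rewrite mx11_eq0.
  by rewrite -coordE mulf_eq0 (negbTE (c_neq0 i)) orbF.
by rewrite mulmx_b; under eq_bigr do rewrite coordE.
Qed.

End CoordinateFrame.

Section CoordinateHyperplanes.
Variable n : nat.
Implicit Types (J : {set 'I_n}) (u : 'rV[rat]_n).

Lemma sub_hypI J u : (u <= hypI J)%MS = (\sum_(j in J) u 0 j == 0).
Proof.
rewrite sub_kermx_col mxE; congr (_ == 0); rewrite [RHS]big_mkcond /=.
by apply: eq_bigr => j _; rewrite mxE; case: (j \in J); rewrite ?mulr1 ?mulr0.
Qed.

Lemma sub_hypI_set1 i u : (u <= hypI [set i])%MS = (u 0 i == 0).
Proof. by rewrite sub_hypI big_set1. Qed.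

Lemma sub_hypI_setT u : (u <= hypI setT)%MS = (\sum_j u 0 j == 0).
Proof. by rewrite sub_hypI; congr (_ == 0); apply: eq_bigl => j; rewrite inE. Qed.

Lemma rank_hypI J : J != set0 -> \rank (hypI J) = n.-1.
Proof.
case/set0Pn=> j jJ; rewrite mxrank_ker -subn1; congr (_ - _)%N.
rewrite -mxrank_tr rank_rV; case: eqP => // /rowP /(_ j).
by rewrite !mxE jJ => /eqP; rewrite oner_eq0.
Qed.

Lemma hyperplane_hypI J : J != set0 -> is_hyperplane (hypI J).
Proof. by move=> J0; split; [case/set0Pn: J0 => -[j ?] _; lia | exact: rank_hypI]. Qed.

Definition coord_hyps J : seq 'M[rat]_n := [seq hypI [set i] | i <- enum J].

Lemma sub_bigcap_coord_hyps J u :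
  (u <= \bigcap_(H <- coord_hyps J) H)%MS = [forall i in J, u 0 i == 0].
Proof.
rewrite sub_bigcapmx_seq all_map; apply/allP/forall_inP => [uJ i iJ | uJ i].
  by rewrite -sub_hypI_set1; apply: uJ; rewrite mem_enum.
by rewrite mem_enum => /uJ; rewrite /= sub_hypI_set1.
Qed.

Lemma bigcap_coord_hyps_sub J : (\bigcap_(H <- coord_hyps J) H <= hypI J)%MS.
Proof.
apply: submx_rV => u; rewrite sub_bigcap_coord_hyps sub_hypI => /forall_inP uJ.
by rewrite big1 // => i /uJ/eqP.
Qed.

Lemma bigcap_setT_coord_hyps_sub J :
  (\bigcap_(H <- hypI setT :: coord_hyps (~: J)) H <= hypI J)%MS.
Proof.
apply: submx_rV => u; rewrite big_cons sub_capmx sub_hypI_setT sub_bigcap_coord_hyps.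
case/andP=> /eqP u0 /forall_inP uJ.
have uJc : \sum_(i | i \notin J) u 0 i = 0.
  by rewrite big1 // => i iJ; apply/eqP/uJ; rewrite inE.
by rewrite sub_hypI; apply/eqP; rewrite -[RHS]u0 [RHS](bigID (mem J)) /= uJc addr0.
Qed.

Lemma delta_sub_coord_hyps i :
  (('e_i : 'rV[rat]_n) <= \bigcap_(H <- coord_hyps [set~ i]) H)%MS.
Proof.
rewrite sub_bigcap_coord_hyps; apply/forall_inP => j; rewrite !inE mxE.
by move/negbTE->; rewrite andbF.
Qed.

Lemma coord_hyps_not_sub_set1 i :
  ~~ (\bigcap_(H <- coord_hyps [set~ i]) H <= hypI [set i])%MS.
Proof.
apply: contraL (delta_sub_coord_hyps i) => /(submx_trans _) sub.
by apply/negP => /sub; rewrite sub_hypI_set1 mxE !eqxx oner_eq0.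
Qed.

Lemma coord_hyps_not_sub_setT i :
  ~~ (\bigcap_(H <- coord_hyps [set~ i]) H <= hypI setT)%MS.
Proof.
apply: contraL (delta_sub_coord_hyps i) => /(submx_trans _) sub.
apply/negP => /sub; rewrite sub_hypI_setT (bigD1 i) //= big1 ?addr0.
  by rewrite mxE !eqxx oner_eq0.
by move=> j ji; rewrite mxE (negbTE ji) andbF.
Qed.

End CoordinateHyperplanes.

Section ConnSubgraphArr.
Variables (n : nat) (e : rel 'I_n).
Local Notation A := (conn_subgraph_arr e).

Lemma mem_conn_subgraph_arr J :
  J != set0 -> induced_connected e J -> hypI J \in A.
Proof. by move=> J0 eJ; apply: map_f; rewrite mem_enum inE J0 eJ. Qed.

Lemma conn_subgraph_arrP H :
  H \in A -> exists2 J, (J != set0) && induced_connected e J & H = hypI J.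
Proof. by case/mapP => J; rewrite mem_enum inE => eJ ->; exists J. Qed.

Lemma arrangement_conn_subgraph_arr : arrangement A.
Proof. by move=> _ /conn_subgraph_arrP[J /andP[J0 _] ->]; apply: hyperplane_hypI. Qed.

Lemma induced_connected_set1 i : induced_connected e [set i].
Proof.
by apply/forall_inP => x /set1P-> ; apply/forall_inP => y /set1P->; apply: connect0.
Qed.

Lemma coord_hyps_sub J : {subset coord_hyps J <= A}.
Proof.
move=> _ /mapP[i _ ->]; apply: mem_conn_subgraph_arr (induced_connected_set1 i).
by apply/set0Pn; exists i; rewrite inE.
Qed.

End ConnSubgraphArr.

Section Transport.
Variables (n : nat) (e : rel 'I_n) (C : seq 'M[rat]_n) (k : 'M[rat]_n -> 'M[rat]_n).
Local Notation A := (conn_subgraph_arr e).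
Hypotheses (n_gt0 : (0 < n)%N) (e_conn : graph_connected e).
Hypotheses (arC : arrangement C) (kM : hyp_matching C A k).

Lemma hypI_setT_mem : hypI setT \in A.
Proof. by apply: mem_conn_subgraph_arr e_conn; apply/set0Pn; exists (Ordinal n_gt0). Qed.

Lemma hypI_set1_mem i : hypI [set i] \in A.
Proof. by apply: (@coord_hyps_sub _ e [set i]); apply: map_f; rewrite mem_enum set11. Qed.

Lemma matching_witness i H0 : H0 \in A ->
  ~~ (\bigcap_(H <- coord_hyps [set~ i]) H <= H0)%MS ->
  exists2 u : 'rV_n, (forall j, j != i -> (u <= k (hypI [set j]))%MS) & ~~ (u <= k H0)%MS.
Proof.
case: kM => _ _ kP H0A; rewrite (kP _ _ (@coord_hyps_sub _ e _) H0A) => /row_subPn[r nr].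
exists (row r (\bigcap_(H <- map k (coord_hyps [set~ i])) H)%MS) => // j ji.
apply: submx_trans (row_sub _ _) (bigcapmx_seq_inf _).
by apply/map_f/map_f; rewrite mem_enum !inE.
Qed.

Definition standard_frame (phi : 'M[rat]_n) := forall v : 'rV_n,
  (forall i, (v *m phi <= k (hypI [set i]))%MS = (v 0 i == 0)) /\
  (v *m phi <= k (hypI setT))%MS = (\sum_i v 0 i == 0).

Lemma matching_frame : exists2 phi, phi \in unitmx & standard_frame phi.
Proof.
case: (kM) => kC _ _.
have normal H : H \in A -> exists a : 'cV[rat]_n, (k H == kermx a)%MS.
  by move=> HA; apply: hyperplane_kermx; apply/arC/kC.
have [b /eqmxP bP] := normal _ hypI_setT_mem.
pose a i := xchoose (normal _ (hypI_set1_mem i)).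
have aP i : (k (hypI [set i]) :=: kermx (a i))%MS by apply/eqmxP/(xchooseP (normal _ _)).
have witness i H0 (c : 'cV[rat]_n) : (k H0 :=: kermx c)%MS -> H0 \in A ->
    ~~ (\bigcap_(H <- coord_hyps [set~ i]) H <= H0)%MS ->
  exists2 u : 'rV_n, (forall j, j != i -> u *m a j = 0) & u *m c != 0.
  move=> kc H0A nsub; have [u uk nu] := matching_witness H0A nsub.
  exists u => [j ji|]; last by rewrite kc sub_kermx in nu.
  by apply/eqP; rewrite -sub_kermx -aP uk.
have [phi phiU phiP] := coordinate_frame
  (fun i => witness i _ _ (aP i) (hypI_set1_mem i) (coord_hyps_not_sub_set1 i))
  (fun i => witness i _ _ bP hypI_setT_mem (coord_hyps_not_sub_setT i)).
exists phi => // v; have [phi_a phi_b] := phiP v.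
by split=> [i|]; [rewrite aP sub_kermx phi_a | rewrite bP sub_kermx phi_b].
Qed.

Section FixedFrame.
Variable phi : 'M[rat]_n.
Hypothesis phi_unit : phi \in unitmx.
Hypothesis phi_frame : standard_frame phi.

Lemma matching_hypI_sub_coord J (v : 'rV_n) : hypI J \in A ->
  (forall i, i \in J -> v 0 i = 0) -> (v *m phi <= k (hypI J))%MS.
Proof.
case: kM => _ _ kP HJ vJ.
have := bigcap_coord_hyps_sub J; rewrite (kP _ _ (@coord_hyps_sub _ e J) HJ).
apply: submx_trans; rewrite sub_bigcapmx_seq -map_comp all_map; apply/allP => i.
by rewrite mem_enum => iJ /=; rewrite (phi_frame v).1 vJ.
Qed.

Lemma matching_hypI_sub_sum J (z : 'rV_n) : hypI J \in A -> \sum_i z 0 i = 0 ->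
  (forall i, i \notin J -> z 0 i = 0) -> (z *m phi <= k (hypI J))%MS.
Proof.
case: kM => _ _ kP HJ z0 zJ.
have tA : {subset hypI setT :: coord_hyps (~: J) <= A}.
  move=> H; rewrite inE => /predU1P[-> | /(@coord_hyps_sub _ e)] //.
  exact: hypI_setT_mem.
have := bigcap_setT_coord_hyps_sub J; rewrite (kP _ _ tA HJ).
apply: submx_trans; rewrite /= big_cons sub_capmx (phi_frame z).2 z0 eqxx /=.
rewrite sub_bigcapmx_seq -map_comp all_map; apply/allP => i.
by rewrite mem_enum inE => iJ /=; rewrite (phi_frame z).1 zJ.
Qed.

Lemma matching_hypI J :
  J != set0 -> induced_connected e J -> (k (hypI J) == hypI J *m phi)%MS.
Proof.
move=> J0 eJ; have HJ := mem_conn_subgraph_arr J0 eJ.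
have sub : (hypI J *m phi <= k (hypI J))%MS.
  apply/row_subP => r; rewrite row_mul; set u := row r (hypI J).
  have /eqP uJ : \sum_(j in J) u 0 j == 0 by rewrite -sub_hypI row_sub.
  pose v := \row_j (if j \in J then 0 else u 0 j).
  pose z := \row_j (if j \in J then u 0 j else 0).
  have -> : u = v + z by apply/rowP => j; rewrite !mxE; case: ifP; rewrite ?addr0 ?add0r.
  rewrite mulmxDl addmx_sub //.
    by apply: matching_hypI_sub_coord => // i iJ; rewrite mxE iJ.
  apply: matching_hypI_sub_sum => // [|i /negbTE iJ]; last by rewrite mxE iJ.
  by rewrite -[RHS]uJ [RHS]big_mkcond; apply: eq_bigr => j _; rewrite mxE.
case: kM => kC _ _; apply/eqmxP/eqmx_sym/eqmxP.
rewrite -(mxrank_leqif_eq sub).2 mxrankMfree ?row_free_unit // rank_hypI //.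
by case: (arC (kC _ HJ)) => _ ->.
Qed.

End FixedFrame.

End Transport.

Theorem mainTheorem1 (n : nat) (e : rel 'I_n) :
  simple_graph e -> graph_connected e ->
  forall C : seq 'M[rat]_n, arrangement C ->
    lattice_iso C (conn_subgraph_arr e) ->
    exists2 phi : 'M[rat]_n, phi \in unitmx & image_arr phi (conn_subgraph_arr e) C.
Proof.
move=> _ e_conn C arC iso.
have [n0 | n_gt0] := posnP n.
  exists 1%:M; first exact: unitmx1.
  split=> H; first by case/arC => n_gt0; rewrite n0 in n_gt0.
  by case/conn_subgraph_arrP=> J /andP[/set0Pn[[j j_lt] _] _] _; rewrite n0 in j_lt.
have [k kM] := lattice_iso_matching arC (@arrangement_conn_subgraph_arr _ e) iso.
have [phi phiU phiP] := matching_frame n_gt0 e_conn arC kM.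
have kJ := matching_hypI n_gt0 e_conn arC kM phiU phiP.
exists phi => //; case: (kM) => kC k_onto _; split.
  move=> K /k_onto[_ /conn_subgraph_arrP[J /andP[J0 eJ] ->] /eqmxP KJ].
  exists (hypI J); first exact: mem_conn_subgraph_arr.
  exact/eqmxP/(eqmx_trans KJ)/eqmxP/kJ.
move=> _ /conn_subgraph_arrP[J /andP[J0 eJ] ->].
by exists (k (hypI J)); [apply/kC/mem_conn_subgraph_arr | apply: kJ].
Qed.
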